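(* Let $H$ be a group, $K\lneq H$, $\phi\in\operatorname{Aut}(H)$, $G=\langle H,t;\ tkt^{-1}=\phi(k),\ k\in K\rangle$. For every $g\in G$ there exist $i\in\mathbb{Z}$ and $a\in H$ such that for all $b,c\in H$ with $g^{-1}bg=c$ we have $c=a^{-1}\phi^{i}(b)a$. *)

From Stdlib Require Import ZArith.

Record Group := {
  carrier :> Type;
  gmul : carrier -> carrier -> carrier;
  gone : carrier;
  ginv : carrier -> carrier;
  gmulA : forall x y z, gmul x (gmul y z) = gmul (gmul x y) z;
  gmul1l : forall x, gmul gone x = x;
  gmul1r : forall x, gmul x gone = x;
  gmulVl : forall x, gmul (ginv x) x = gone;
  gmulVr : forall x, gmul x (ginv x) = gone
}.

Arguments gmul {g}.
Arguments gone {g}.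
Arguments ginv {g}.

Record hom (A B : Group) := {
  hfun :> A -> B;
  hmulP : forall x y, hfun (gmul x y) = gmul (hfun x) (hfun y)
}.

Definition is_subgroup (H : Group) (K : H -> Prop) : Prop :=
  K gone /\ (forall x y, K x -> K y -> K (gmul x y)) /\ (forall x, K x -> K (ginv x)).

Definition is_proper_subgroup (H : Group) (K : H -> Prop) : Prop :=
  is_subgroup H K /\ exists h : H, ~ K h.

Arguments is_subgroup {H}.
Record aut (H : Group) := {
  aut_hom :> hom H H;
  aut_inv : H -> H;
  aut_invK : forall x, aut_inv (aut_hom x) = x;
  aut_K : forall x, aut_hom (aut_inv x) = x
}.

Definition aut_pow (H : Group) (phi : aut H) (i : Z) : H -> H :=
  match i with
  | Z0 => fun x => x
  | Zpos p => fun x => Pos.iter (fun y => phi y) x p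
  | Zneg p => fun x => Pos.iter (aut_inv H phi) x p
  end.

(* (G, iota, t) is the HNN extension  < H, t ; t k t^-1 = phi(k), k in K >,
   characterised (up to unique isomorphism) by the universal property of the
   presentation: iota : H -> G and t satisfy the relations, and for every
   group L, homomorphism f : H -> L and s in L satisfying the relations there
   is a unique homomorphism F : G -> L with F o iota = f and F t = s. *)
Definition is_HNN (H : Group) (K : H -> Prop) (phi : aut H)
  (G : Group) (iota : hom H G) (t : G) : Prop :=
  (forall k, K k -> gmul (gmul t (iota k)) (ginv t) = iota (phi k)) /\
  (forall (L : Group) (f : hom H L) (s : L),
     (forall k, K k -> gmul (gmul s (f k)) (ginv s) = f (phi k)) ->
     exists F : hom G L,
       (forall h, F (iota h) = f h) /\ F t = s /\
       (forall F' : hom G L, (forall h, F' (iota h) = f h) -> F' t = s ->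
          forall x, F' x = F x)).

Arguments is_proper_subgroup {H}.
Arguments aut_pow {H}.
Arguments is_HNN {H} K phi {G} iota t.

From Stdlib Require Import ZArith Lia.

(* The relation t k t^-1 = phi(k) holds for every k in H inside the semidirect
   product H x| Z, where the generator of Z acts by phi.  By the universal
   property G maps to it, sending H to H x 0 and t to (1, 1); there the
   conjugate of (b, 0) by g = (x, n) is (a^-1 phi^-n(b) a, 0) with
   a = phi^-n(x), and the embedding of H is injective. *)

Section GroupFacts.
Variable H : Group.

Lemma mulg_cancel_l (a x y : H) : gmul a x = gmul a y -> x = y.
Proof.
  intro E. rewrite <- (gmul1l H x), <- (gmul1l H y), <- (gmulVl H a),
    <- !gmulA, E. reflexivity.
Qed.

Lemma inv_eq_of_mul_eq1 (x y : H) : gmul x y = gone -> y = ginv x.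
Proof.
  intro E. apply (mulg_cancel_l x). rewrite E, gmulVr. reflexivity.
Qed.

End GroupFacts.

Arguments mulg_cancel_l {H}.
Arguments inv_eq_of_mul_eq1 {H}.

Section HomFacts.
Variable H : Group.

Lemma hom_one (L : Group) (f : hom H L) : f gone = gone.
Proof.
  apply (mulg_cancel_l (f gone)). rewrite <- hmulP, !gmul1r. reflexivity.
Qed.

Lemma hom_inv (L : Group) (f : hom H L) (x : H) : f (ginv x) = ginv (f x).
Proof.
  apply inv_eq_of_mul_eq1. rewrite <- hmulP, gmulVr. apply hom_one.
Qed.

End HomFacts.

Section AutPow.
Variables (H : Group) (phi : aut H).

Lemma aut_inv_mul (x y : H) :
  aut_inv H phi (gmul x y) = gmul (aut_inv H phi x) (aut_inv H phi y).
Proof.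
  rewrite <- (aut_K H phi x) at 1. rewrite <- (aut_K H phi y) at 1.
  rewrite <- hmulP. apply aut_invK.
Qed.

Lemma aut_pow_succ (m : Z) (x : H) :
  aut_pow phi (Z.succ m) x = phi (aut_pow phi m x).
Proof.
  destruct m as [|p|p].
  - reflexivity.
  - replace (Z.succ (Z.pos p)) with (Z.pos (Pos.succ p)) by lia.
    apply Pos.iter_succ.
  - destruct (Pos.succ_pred_or p) as [->|E].
    + symmetry. apply aut_K.
    + rewrite <- E.
      replace (Z.succ (Z.neg (Pos.succ (Pos.pred p)))) with (Z.neg (Pos.pred p))
        by lia.
      simpl. rewrite Pos.iter_succ, aut_K. reflexivity.
Qed.

Lemma aut_pow_pred (m : Z) (x : H) :
  aut_pow phi (Z.pred m) x = aut_inv H phi (aut_pow phi m x).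
Proof.
  destruct m as [|p|p].
  - reflexivity.
  - destruct (Pos.succ_pred_or p) as [->|E].
    + symmetry. apply aut_invK.
    + rewrite <- E.
      replace (Z.pred (Z.pos (Pos.succ (Pos.pred p)))) with (Z.pos (Pos.pred p))
        by lia.
      simpl. rewrite Pos.iter_succ, aut_invK. reflexivity.
  - replace (Z.pred (Z.neg p)) with (Z.neg (Pos.succ p)) by lia.
    apply Pos.iter_succ.
Qed.

Lemma aut_pow_add (m n : Z) (x : H) :
  aut_pow phi (m + n) x = aut_pow phi m (aut_pow phi n x).
Proof.
  induction m using Z.peano_ind.
  - reflexivity.
  - rewrite Z.add_succ_l, !aut_pow_succ, IHm. reflexivity.
  - rewrite Z.add_pred_l, !aut_pow_pred, IHm. reflexivity.
Qed.

Lemma aut_pow_mul (m : Z) (x y : H) :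
  aut_pow phi m (gmul x y) = gmul (aut_pow phi m x) (aut_pow phi m y).
Proof.
  induction m using Z.peano_ind.
  - reflexivity.
  - rewrite !aut_pow_succ, IHm, hmulP. reflexivity.
  - rewrite !aut_pow_pred, IHm, aut_inv_mul. reflexivity.
Qed.

Lemma aut_pow_one (m : Z) : aut_pow phi m gone = gone.
Proof.
  apply (mulg_cancel_l (aut_pow phi m gone)).
  rewrite <- aut_pow_mul, !gmul1r. reflexivity.
Qed.

Lemma aut_pow_inv (m : Z) (x : H) :
  aut_pow phi m (ginv x) = ginv (aut_pow phi m x).
Proof.
  apply inv_eq_of_mul_eq1. rewrite <- aut_pow_mul, gmulVr. apply aut_pow_one.
Qed.

End AutPow.

Section SemidirectProduct.
Variables (H : Group) (phi : aut H).

(* (x, m) stands for x t^m, so that t^m y = phi^m(y) t^m. *)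
Definition sdprod_mul (u v : H * Z) : H * Z :=
  (gmul (fst u) (aut_pow phi (snd u) (fst v)), (snd u + snd v)%Z).

Definition sdprod_inv (u : H * Z) : H * Z :=
  (aut_pow phi (- snd u) (ginv (fst u)), (- snd u)%Z).

Lemma sdprod_mulA (x y z : H * Z) :
  sdprod_mul x (sdprod_mul y z) = sdprod_mul (sdprod_mul x y) z.
Proof.
  destruct x as [x m], y as [y n], z as [z p]; unfold sdprod_mul; simpl.
  f_equal; [|lia]. rewrite aut_pow_mul, aut_pow_add, gmulA. reflexivity.
Qed.

Lemma sdprod_mul1l (x : H * Z) : sdprod_mul (gone, 0%Z) x = x.
Proof. destruct x; unfold sdprod_mul; simpl. rewrite gmul1l. reflexivity. Qed.

Lemma sdprod_mul1r (x : H * Z) : sdprod_mul x (gone, 0%Z) = x.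
Proof.
  destruct x; unfold sdprod_mul; simpl.
  rewrite aut_pow_one, gmul1r, Z.add_0_r. reflexivity.
Qed.

Lemma sdprod_mulVl (x : H * Z) : sdprod_mul (sdprod_inv x) x = (gone, 0%Z).
Proof.
  destruct x as [x m]; unfold sdprod_mul, sdprod_inv; simpl.
  f_equal; [|lia]. rewrite <- aut_pow_mul, gmulVl. apply aut_pow_one.
Qed.

Lemma sdprod_mulVr (x : H * Z) : sdprod_mul x (sdprod_inv x) = (gone, 0%Z).
Proof.
  destruct x as [x m]; unfold sdprod_mul, sdprod_inv; simpl.
  f_equal; [|lia]. rewrite <- aut_pow_add.
  replace (m + - m)%Z with 0%Z by lia. apply gmulVr.
Qed.

Definition SDprod : Group := {|
  carrier := H * Z; gmul := sdprod_mul; gone := (gone, 0%Z); ginv := sdprod_inv;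
  gmulA := sdprod_mulA; gmul1l := sdprod_mul1l; gmul1r := sdprod_mul1r;
  gmulVl := sdprod_mulVl; gmulVr := sdprod_mulVr |}.

Definition sdprod_emb : hom H SDprod :=
  {| hfun := fun h : H => ((h, 0%Z) : SDprod); hmulP := fun _ _ => eq_refl |}.

Lemma sdprod_conj_t (k : H) :
  gmul (gmul ((gone, 1%Z) : SDprod) (sdprod_emb k)) (ginv ((gone, 1%Z) : SDprod))
  = sdprod_emb (phi k).
Proof.
  simpl. unfold sdprod_mul, sdprod_inv; simpl.
  rewrite aut_K, gmul1l, <- (inv_eq_of_mul_eq1 gone gone (gmul1l _ gone)), gmul1r.
  reflexivity.
Qed.

Lemma sdprod_conj_emb (x : H) (n : Z) (b : H) :
  gmul (gmul (ginv ((x, n) : SDprod)) (sdprod_emb b)) (x, n)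
  = sdprod_emb (gmul (gmul (ginv (aut_pow phi (- n) x)) (aut_pow phi (- n) b))
                     (aut_pow phi (- n) x)).
Proof.
  simpl. unfold sdprod_mul, sdprod_inv; simpl.
  rewrite aut_pow_inv, Z.add_0_r. f_equal. lia.
Qed.

End SemidirectProduct.

Lemma HNN_to_sdprod (H : Group) (K : H -> Prop) (phi : aut H)
  (G : Group) (iota : hom H G) (t : G) :
  is_HNN K phi iota t ->
  exists F : hom G (SDprod H phi), forall h, F (iota h) = sdprod_emb H phi h.
Proof.
  intros [_ universal].
  destruct (universal _ (sdprod_emb H phi) (gone, 1%Z)) as [F [HF _]].
  - intros k _. apply sdprod_conj_t.
  - exists F. exact HF.
Qed.

Theorem lemma3p2 (H : Group) (K : H -> Prop) (phi : aut H)
  (G : Group) (iota : hom H G) (t : G)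
  (hK : is_proper_subgroup K) (hG : is_HNN K phi iota t) :
  forall g : G, exists (i : Z) (a : H),
    forall b c : H, gmul (gmul (ginv g) (iota b)) g = iota c ->
      c = gmul (gmul (ginv a) (aut_pow phi i b)) a.
Proof.
  intro g.
  destruct (HNN_to_sdprod H K phi G iota t hG) as [F HF].
  destruct (F g) as [x n] eqn:Fg.
  exists (- n)%Z, (aut_pow phi (- n) x).
  intros b c E. apply (f_equal F) in E.
  rewrite !hmulP, hom_inv, !HF, Fg, sdprod_conj_emb in E.
  now injection E.
Qed.
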